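(* Let $\mathcal{A}$ be a C*-algebra, let $E$ be a Hilbert $\mathcal{A}$-module satisfying property $[\mathbb{H}]$, let $C\in\mathcal{K}(E)$ and put $L:=I-C$. Then: (1) For every $y$ in the norm closure of $\mathrm{Ran}(L)$ there exist sequences $(x_n)$ in $E$ and $(u_n)$ in the closed submodule $\mathrm{Ker}(L)$ such that $Lx_n=x_n-Cx_n\to y$ and, for every $n$, $$\|x_n-u_n\|=\delta_n:=\inf\{\|x_n-u\|:\ u\in \mathrm{Ker}(L)\}.$$ (2) For such sequences, the sequence $\zeta_n:=x_n-u_n$ is bounded in $E$.
   Context: A (right) Hilbert $\mathcal{A}$-module $E$ is a right $\mathcal{A}$-module with an $\mathcal{A}$-valued inner product $\langle\cdot,\cdot\rangle$ (linear in the second variable, $\langle x,ya\rangle=\langle x,y\rangle a$, $\langle y,x\rangle=\langle x,y\rangle^*$, $\langle x,x\rangle\ge 0$ with equality iff $x=0$), complete in the norm $\|x\|=\|\langle x,x\rangle\|^{1/2}$. $\mathcal{L}(E)$ denotes the C*-algebra of adjointable operators on $E$; for $x,y\in E$, $\theta_{x,y}(z)=x\langle y,z\rangle$; $\mathcal{K}(E)$ (the compact operators) is the norm closure in $\mathcal{L}(E)$ of the linear span of $\{\theta_{x,y}:x,y\in E\}$. $E$ satisfies property $[\mathbb{H}]$ if for every bounded sequence $(\zeta_n)$ in $E$ there exist a subsequence $(\zeta_{n_k})$ and $\zeta\in E$ such that $\langle v,\zeta_{n_k}\rangle\to\langle v,\zeta\rangle$ for every $v\in E$. *)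

(* Scalars: C := R[i] (complex numbers over a
   realType R, from mathcomp-real-closed); every realType is a model of the
   reals, so R[i] is the field of complex numbers. *)
From HB Require Import structures.
From mathcomp Require Import all_boot all_order all_algebra.
From mathcomp Require Import all_classical all_reals all_analysis.
From mathcomp Require Import complex.
Set Implicit Arguments. Unset Strict Implicit. Unset Printing Implicit Defensive.
Import Order.TTheory GRing.Theory Num.Theory.
Import numFieldNormedType.Exports.
Local Open Scope classical_set_scope.
Local Open Scope ring_scope.

(* Real-valued norm (the norm of a normedModType over R[i] takes values in
   R[i], but is always a nonnegative real; we take its real part). *)
Definition rnorm (R : realType) (V : normedModType R[i]) (x : V) : R :=
  complex.Re `|x|.

Record Cstar_algebra (R : realType) (A : completeNormedModType R[i])
    (mul : A -> A -> A) (star : A -> A) : Prop := {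
  cs_mulA : forall a b c, mul a (mul b c) = mul (mul a b) c;
  cs_mulDl : forall a b c, mul (a + b) c = mul a c + mul b c;
  cs_mulDr : forall a b c, mul a (b + c) = mul a b + mul a c;
  cs_mulZl : forall (k : R[i]) a b, mul (k *: a) b = k *: mul a b;
  cs_mulZr : forall (k : R[i]) a b, mul a (k *: b) = k *: mul a b;
  cs_normM : forall a b, `|mul a b| <= `|a| * `|b|;
  cs_starD : forall a b, star (a + b) = star a + star b;
  cs_starZ : forall (k : R[i]) a, star (k *: a) = (k^*)%C *: star a;
  cs_starK : forall a, star (star a) = a;
  cs_starM : forall a b, star (mul a b) = mul (star b) (star a);
  cs_Cstar : forall a, `|mul (star a) a| = `|a| ^+ 2
}.

Definition Cstar_pos (R : realType) (A : completeNormedModType R[i])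
    (mul : A -> A -> A) (star : A -> A) (a : A) : Prop :=
  exists b, a = mul (star b) b.

Record Hilbert_module (R : realType) (A : completeNormedModType R[i])
    (mul : A -> A -> A) (star : A -> A)
    (E : completeNormedModType R[i]) (act : E -> A -> E) (ip : E -> E -> A)
    : Prop := {
  hm_actDl : forall x y a, act (x + y) a = act x a + act y a;
  hm_actDr : forall x a b, act x (a + b) = act x a + act x b;
  hm_actM : forall x a b, act x (mul a b) = act (act x a) b;
  hm_actZl : forall (k : R[i]) x a, act (k *: x) a = k *: act x a;
  hm_actZr : forall (k : R[i]) x a, act x (k *: a) = k *: act x a;
  hm_ipD : forall x y z, ip x (y + z) = ip x y + ip x z;
  hm_ipZ : forall (k : R[i]) x y, ip x (k *: y) = k *: ip x y;
  hm_ipact : forall x y a, ip x (act y a) = mul (ip x y) a;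
  hm_ipC : forall x y, ip y x = star (ip x y);
  hm_ippos : forall x, Cstar_pos mul star (ip x x);
  hm_ipdef : forall x, ip x x = 0 -> x = 0;
  hm_norm : forall x, `|x| ^+ 2 = `|ip x x|
}.

Definition property_H (R : realType) (A : completeNormedModType R[i])
    (E : completeNormedModType R[i]) (ip : E -> E -> A) : Prop :=
  forall zeta : nat -> E, (exists M : R, forall n, rnorm (zeta n) <= M) ->
  exists (phi : nat -> nat) (z : E),
    {homo phi : m n / (m < n)%N} /\
    forall v : E, (fun k => ip v (zeta (phi k))) @ \oo --> ip v z.

Definition adjointable (R : realType) (A : completeNormedModType R[i])
    (E : completeNormedModType R[i]) (ip : E -> E -> A) (T : E -> E) : Prop :=
  exists T' : E -> E, forall x y, ip (T x) y = ip x (T' y).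

Definition theta (R : realType) (A : completeNormedModType R[i])
    (E : completeNormedModType R[i]) (act : E -> A -> E) (ip : E -> E -> A)
    (x y : E) : E -> E := fun z => act x (ip y z).

Definition finite_rank_op (R : realType) (A : completeNormedModType R[i])
    (E : completeNormedModType R[i]) (act : E -> A -> E) (ip : E -> E -> A)
    (s : seq (E * E)) : E -> E :=
  fun z => \sum_(p <- s) theta act ip p.1 p.2 z.

(* K(E): the closure in L(E) (for the operator norm) of the linear span of
   the theta_{x,y}.  ||T - K||_op <= eps is written out as
   forall z, ||T z - K z|| <= eps ||z||. *)
Definition compact_op (R : realType) (A : completeNormedModType R[i])
    (E : completeNormedModType R[i]) (act : E -> A -> E) (ip : E -> E -> A)
    (T : E -> E) : Prop :=
  adjointable ip T /\
  forall eps : R, 0 < eps -> exists s : seq (E * E),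
    forall z, rnorm (T z - finite_rank_op act ip s z) <= eps * rnorm z.

From HB Require Import structures.
From mathcomp Require Import all_boot all_order all_algebra.
From mathcomp Require Import all_classical all_reals all_analysis.
From mathcomp Require Import complex lra.
Set Implicit Arguments. Unset Strict Implicit. Unset Printing Implicit Defensive.
Import Order.TTheory GRing.Theory Num.Theory.
Import numFieldNormedType.Exports.
Local Open Scope classical_set_scope.
Local Open Scope ring_scope.

(* Property [H] extracts from a bounded sequence a weakly convergent
   subsequence, and the compact operator C turns it into a norm convergent
   one.  So if (z_n) is bounded and (I - C) z_n -> y, then along a
   subsequence z_n = (I - C) z_n + C z_n converges in norm, necessarily to its
   weak limit w, and (I - C) w = y.  Applied to a minimizing sequence in
   Ker(I - C), this shows that the distance to the kernel is attained.
   Applied to zeta_n / ||zeta_n|| along a subsequence with ||zeta_n|| -> oo,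
   whose images under I - C tend to 0 while their distance to the kernel is
   1, it yields a contradiction.  Continuity of the inner product comes from
   the polarization bound ||<x, y>|| <= (||x|| + ||y||)^2, which needs no
   Cauchy-Schwarz inequality. *)

Section RealNorm.
Variables (R : realType) (V : normedModType R[i]).
Implicit Types (x y : V) (k : R[i]) (t : R).

Lemma rnormE x : `|x| = (rnorm x)%:C%C.
Proof. by rewrite /rnorm RRe_real // ger0_real. Qed.

Lemma rnorm_ge0 x : 0 <= rnorm x.
Proof. by rewrite -ler0c -rnormE. Qed.

Lemma rnorm0 : rnorm (0 : V) = 0.
Proof. by rewrite /rnorm normr0. Qed.

Lemma rnorm0_eq0 x : rnorm x = 0 -> x = 0.
Proof. by move=> x0; apply/eqP; rewrite -normr_eq0 rnormE x0. Qed.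

Lemma rnormN x : rnorm (- x) = rnorm x.
Proof. by rewrite /rnorm normrN. Qed.

Lemma rdistC x y : rnorm (x - y) = rnorm (y - x).
Proof. by rewrite -rnormN opprB. Qed.

Lemma ler_rnormD x y : rnorm (x + y) <= rnorm x + rnorm y.
Proof. by rewrite -lecR rmorphD /= -!rnormE ler_normD. Qed.

Lemma ler_rnormB x y : rnorm (x - y) <= rnorm x + rnorm y.
Proof. by rewrite -(rnormN y) ler_rnormD. Qed.

Lemma rnormZ k x : rnorm (k *: x) = complex.Re `|k| * rnorm x.
Proof. by apply: complexI; rewrite rmorphM /= -!rnormE normrZ. Qed.

Lemma rnormZ_real t x : rnorm (t%:C%C *: x) = `|t| * rnorm x.
Proof. by rewrite rnormZ normc_def /= expr0n addr0 sqrtr_sqr. Qed.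

Lemma rnormMn x n : rnorm (x *+ n) = n%:R * rnorm x.
Proof. by rewrite -scaler_nat -(rmorph_nat (real_complex R)) rnormZ_real normr_nat. Qed.

Lemma cvg_rnormP {I : Type} {F : set_system I} {FF : Filter F} (f : I -> V) y :
  f @ F --> y <-> forall e, 0 < e -> \forall i \near F, rnorm (y - f i) < e.
Proof.
split=> [/cvgrPdist_lt fy e e0|fy].
  by near do rewrite -ltcR -rnormE; apply: fy; rewrite ltcR.
apply/cvgrPdist_lt => e e0; rewrite -[e]RRe_real ?gtr0_real //.
by near do rewrite rnormE ltcR; apply: fy; rewrite -ltcR RRe_real ?gtr0_real.
Unshelve. all: by end_near.
Qed.

Lemma cvgn_rnorm_bounded (u : nat -> V) y :
  u @ \oo --> y -> exists M, forall n, rnorm (u n) <= M.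
Proof.
move=> /cvg_rnormP/(_ 1 ltr01) [N _ u_near].
exists (Num.max (rnorm y + 1) (\big[Num.max/0]_(i < N) rnorm (u i))) => n.
rewrite le_max; apply/orP; case: (ltnP n N) => [n_lt_N | N_le_n]; [right | left].
  exact: (le_bigmax 0 (fun i : 'I_N => rnorm (u i)) (Ordinal n_lt_N)).
have -> : u n = y - (y - u n) by rewrite opprB addrC subrK.
by rewrite (le_trans (ler_rnormB _ _)) // lerD2l ltW // u_near.
Qed.

Lemma scale_inv_cvg0 (u : nat -> V) (t : nat -> R) B :
  (forall n, rnorm (u n) <= B) -> (forall n, n.+1%:R < t n) ->
  (fun n => (t n)^-1%:C%C *: u n) @ \oo --> 0.
Proof.
move=> u_le t_large; apply/cvg_rnormP => e e_gt0.
have B_ge0 : 0 <= B := le_trans (rnorm_ge0 _) (u_le 0%N).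
have eB_gt0 : 0 < e / (B + 1) by rewrite divr_gt0 ?ltr_wpDl.
near=> n; have t_gt0 : 0 < t n := lt_trans (ltr0Sn _ _) (t_large n).
have tinv_gt0 : 0 < (t n)^-1 by rewrite invr_gt0.
rewrite sub0r rnormN rnormZ_real gtr0_norm //.
apply: (le_lt_trans (ler_wpM2l (ltW tinv_gt0) (u_le _))).
apply: (le_lt_trans (ler_wpM2l (ltW tinv_gt0) (_ : B <= B + 1))); first by rewrite lerDl.
rewrite -ltr_pdivlMr ?ltr_wpDl //.
have : n.+1%:R^-1 < e / (B + 1) by near: n; apply: near_infty_natSinv_lt (PosNum eB_gt0).
by apply: lt_trans; rewrite ltf_pV2 ?posrE.
Unshelve. all: by end_near.
Qed.

Lemma closure_range_cvg (T : Type) (f : T -> V) y :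
  closure (range f) y -> exists x : nat -> T, (fun n => f (x n)) @ \oo --> y.
Proof.
move=> y_cl.
have /choice [x x_close] : forall n : nat, exists x : T, rnorm (y - f x) < n.+1%:R^-1.
  move=> n; have n_gt0 : 0 < (n.+1%:R^-1 : R)%:C%C by rewrite ltcR invr_gt0.
  have [_ [[x _ <-] yfx]] := y_cl _ (nbhsx_ballx y _ n_gt0).
  by exists x; move: yfx; rewrite -ball_normE /ball_ /= rnormE ltcR.
exists x; apply/cvg_rnormP => e e_gt0; near=> n.
apply: lt_trans (x_close n) _; near: n.
exact: near_infty_natSinv_lt (PosNum e_gt0).
Unshelve. all: by end_near.
Qed.

End RealNorm.

Lemma homo_ltn_cvgny (phi : nat -> nat) :
  {homo phi : m n / (m < n)%N} -> phi @ \oo --> \oo.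
Proof.
move=> phi_incr; apply/cvgnyPge => N; exists N => // n /= leNn.
apply: leq_trans leNn _; elim: n => // n IH.
exact: leq_ltn_trans IH (phi_incr _ _ _).
Qed.

Section AdditiveMorph.
Variables (G H : zmodType) (f : G -> H).
Hypothesis fD : {morph f : a b / a + b}.

Lemma addmorph0 : f 0 = 0.
Proof. by apply: (addrI (f 0)); rewrite -fD !addr0. Qed.

Lemma addmorphN : {morph f : a / - a}.
Proof. by move=> a; apply: (addrI (f a)); rewrite -fD !subrr addmorph0. Qed.

Lemma addmorphB : {morph f : a b / a - b}.
Proof. by move=> a b; rewrite fD addmorphN. Qed.

End AdditiveMorph.

Lemma bounded_additive_cvg (R : realType) (V W : normedModType R[i]) (f : V -> W) (c : R)
    {I : Type} {F : set_system I} {FF : Filter F} (u : I -> V) (l : V) :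
  {morph f : a b / a + b} -> (forall z, rnorm (f z) <= c * rnorm z) ->
  u @ F --> l -> (fun i => f (u i)) @ F --> f l.
Proof.
move=> fD f_le /cvg_rnormP ul; apply/cvg_rnormP => e e0.
have c1 : 0 < `|c| + 1 by rewrite ltr_wpDl.
near=> i; rewrite -addmorphB //; apply: (le_lt_trans (f_le _)).
apply: (le_lt_trans (y := (`|c| + 1) * rnorm (l - u i))).
  by rewrite ler_wpM2r ?rnorm_ge0 // (le_trans (ler_norm c)) ?lerDl.
by rewrite -ltr_pdivlMl // mulrC; near: i; apply: ul; rewrite divr_gt0.
Unshelve. all: by end_near.
Qed.

Section HilbertModule.
Variables (R : realType) (A : completeNormedModType R[i]).
Variables (mul : A -> A -> A) (star : A -> A).
Variables (E : completeNormedModType R[i]) (act : E -> A -> E) (ip : E -> E -> A).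
Hypotheses (CA : Cstar_algebra mul star) (HM : Hilbert_module mul star act ip).
Implicit Types (a b : A) (x y z v : E).

Lemma ipDl x y z : ip (x + y) z = ip x z + ip y z.
Proof. by rewrite (hm_ipC HM) (hm_ipD HM) (cs_starD CA) -!(hm_ipC HM). Qed.

Lemma ipB x : {morph ip x : y z / y - z}.
Proof. exact/addmorphB/(hm_ipD HM). Qed.

Lemma ipBl z : {morph ip^~ z : x y / x - y}.
Proof. by apply: addmorphB => x y; apply: ipDl. Qed.

Lemma ipZl k x z : ip (k *: x) z = (k^*)%C *: ip x z.
Proof. by rewrite (hm_ipC HM) (hm_ipZ HM) (cs_starZ CA) -!(hm_ipC HM). Qed.

Lemma rnormM a b : rnorm (mul a b) <= rnorm a * rnorm b.
Proof. by rewrite -lecR rmorphM /= -!rnormE; apply: (cs_normM CA). Qed.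

Lemma rnorm_Cstar a : rnorm (mul (star a) a) = rnorm a ^+ 2.
Proof. by apply: complexI; rewrite rmorphXn /= -!rnormE; apply: (cs_Cstar CA). Qed.

Lemma rnorm_ip_self x : rnorm (ip x x) = rnorm x ^+ 2.
Proof. by apply: complexI; rewrite rmorphXn /= -!rnormE (hm_norm HM). Qed.

Lemma ler_rnorm_star a : rnorm a <= rnorm (star a).
Proof.
have [->|a_neq0] := eqVneq (rnorm a) 0; first exact: rnorm_ge0.
have a_gt0 : 0 < rnorm a by rewrite lt0r a_neq0 rnorm_ge0.
by rewrite -(ler_pM2r a_gt0) -expr2 -rnorm_Cstar rnormM.
Qed.

Lemma rnorm_star a : rnorm (star a) = rnorm a.
Proof.
by apply/le_anti; rewrite ler_rnorm_star -{2}(cs_starK CA a) ler_rnorm_star.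
Qed.

(* [<x a, x a> = a^* <x, x> a]. *)
Lemma ler_rnorm_act x a : rnorm (act x a) <= rnorm x * rnorm a.
Proof.
rewrite -ler_sqr ?nnegrE ?mulr_ge0 ?rnorm_ge0 // -rnorm_ip_self.
rewrite (hm_ipact HM) (hm_ipC HM) (hm_ipact HM) (cs_starM CA).
apply: (le_trans (rnormM _ _)).
apply: (le_trans (ler_wpM2r (rnorm_ge0 _) (rnormM _ _))).
by rewrite !rnorm_star rnorm_ip_self exprMn mulrC mulrA -expr2 mulrC.
Qed.

Lemma ip_polarization x y :
  ip (x + y) (x + y) - ip (x - y) (x - y) = (ip x y + ip y x) *+ 2.
Proof.
rewrite ipDl ipBl !ipB !(hm_ipD HM) !opprB !addrA.
rewrite [LHS](ACl (((1*8)*(2*7))*((3*5)*(4*6)))%AC) /=.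
by rewrite !subrr add0r addr0 addrACA mulr2n.
Qed.

Lemma ip_polarization_i x y :
  ip x y *+ 2 = (ip x y + ip y x) - 'i%C *: (ip x ('i%C *: y) + ip ('i%C *: y) x).
Proof.
have conj_i : ('i%C : R[i])^*%C = - 'i%C by apply/eqP; rewrite eq_complex /= oppr0 !eqxx.
rewrite (hm_ipZ HM) ipZl conj_i scalerDr !scalerA mulrN -expr2 sqr_i opprK.
by rewrite scaleN1r scale1r opprD opprK addrACA subrr addr0 mulr2n.
Qed.

Lemma ler_rnorm_ip_sym x y : rnorm (ip x y + ip y x) <= (rnorm x + rnorm y) ^+ 2.
Proof.
rewrite -(ler_pM2l (ltr0Sn R 1)) -rnormMn -ip_polarization.
apply: (le_trans (ler_rnormB _ _)); rewrite !rnorm_ip_self mulr2n mulrDl mul1r.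
by rewrite lerD // ler_sqr ?nnegrE ?addr_ge0 ?rnorm_ge0 ?ler_rnormD ?ler_rnormB.
Qed.

Lemma ler_rnorm_ip x y : rnorm (ip x y) <= (rnorm x + rnorm y) ^+ 2.
Proof.
have norm_i : complex.Re `|('i%C : R[i])| = 1.
  by rewrite normc_def /= expr0n expr1n add0r sqrtr1.
rewrite -(ler_pM2l (ltr0Sn R 1)) -rnormMn ip_polarization_i.
apply: (le_trans (ler_rnormB _ _)); rewrite rnormZ norm_i mul1r mulr2n mulrDl mul1r.
rewrite lerD ?ler_rnorm_ip_sym //.
by have := ler_rnorm_ip_sym x ('i%C *: y); rewrite rnormZ norm_i mul1r.
Qed.

Lemma ler_rnorm_ip_lin v z : rnorm (ip v z) <= (rnorm v + 1) ^+ 2 * rnorm z.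
Proof.
have [z0|z_neq0] := eqVneq (rnorm z) 0.
  by rewrite (rnorm0_eq0 z0) (addmorph0 (hm_ipD HM v)) !rnorm0 mulr0.
have z_gt0 : 0 < rnorm z by rewrite lt0r z_neq0 rnorm_ge0.
set t := rnorm z in z_gt0 *.
have {1}-> : z = t%:C%C *: ((t^-1)%:C%C *: z).
  by rewrite scalerA -rmorphM mulfV ?rmorph1 ?scale1r // gt_eqF.
rewrite (hm_ipZ HM) rnormZ_real gtr0_norm // mulrC ler_pM2r //.
apply: (le_trans (ler_rnorm_ip _ _)).
by rewrite rnormZ_real gtr0_norm ?invr_gt0 // mulVf ?gt_eqF.
Qed.

Section Limits.
Context {I : Type} {F : set_system I} {FF : Filter F}.

Lemma cvg_ipr v (u : I -> E) l : u @ F --> l -> (fun i => ip v (u i)) @ F --> ip v l.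
Proof. exact: (bounded_additive_cvg (hm_ipD HM v) (ler_rnorm_ip_lin v)). Qed.

Lemma cvg_actr x (u : I -> A) l : u @ F --> l -> (fun i => act x (u i)) @ F --> act x l.
Proof. exact: (bounded_additive_cvg (hm_actDr HM x) (ler_rnorm_act x)). Qed.

Lemma weak_lim_eq_lim {FP : ProperFilter F} (u : I -> E) z w :
  u @ F --> z -> (forall v, (fun i => ip v (u i)) @ F --> ip v w) -> w = z.
Proof.
move=> uz uw; apply/eqP; rewrite -subr_eq0; apply/eqP/(hm_ipdef HM).
rewrite ipB; apply/eqP; rewrite subr_eq0; apply/eqP.
exact: cvg_unique (uw _) (cvg_ipr uz).
Qed.

Lemma cvg_finite_rank_op s (u : I -> E) l :
  (forall v, (fun i => ip v (u i)) @ F --> ip v l) ->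
  (fun i => finite_rank_op act ip s (u i)) @ F --> finite_rank_op act ip s l.
Proof.
move=> weak_u; apply: cvg_big => // [|p _]; first exact: add_continuous.
exact/cvg_actr/weak_u.
Qed.

(* Approximate T within eps / 3 by a finite rank operator, which is weakly
   continuous. *)
Lemma compact_op_cvg (T : E -> E) (w : I -> E) w0 M :
  compact_op act ip T -> (forall i, rnorm (w i) <= M) ->
  (forall v, (fun i => ip v (w i)) @ F --> ip v w0) ->
  (fun i => T (w i)) @ F --> T w0.
Proof.
move=> [_ T_approx] w_le weak_w; apply/cvg_rnormP => e e_gt0.
set K := `|M| + rnorm w0 + 1.
have K_gt0 : 0 < K by rewrite ltr_wpDl ?addr_ge0 ?rnorm_ge0.
set eps := e / 3 / K.
have eps_gt0 : 0 < eps by rewrite !divr_gt0.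
have [s Ts] := T_approx eps eps_gt0.
set Fs := finite_rank_op act ip s.
have /cvg_rnormP Fs_cvg : (fun i => Fs (w i)) @ F --> Fs w0 := cvg_finite_rank_op weak_w.
near=> i.
have -> : T w0 - T (w i) = (T w0 - Fs w0) + (Fs w0 - Fs (w i)) + (Fs (w i) - T (w i)).
  by rewrite !addrA !subrK.
have near_w0 := Ts w0.
have near_wi : rnorm (Fs (w i) - T (w i)) <= eps * `|M|.
  by rewrite rdistC (le_trans (Ts _)) // ler_pM2l // (le_trans (w_le i)) ?ler_norm.
have Fs_wi : rnorm (Fs w0 - Fs (w i)) < e / 3 by near: i; apply: Fs_cvg; rewrite divr_gt0.
have eps_K : eps * rnorm w0 + eps * `|M| <= e / 3.
  rewrite -mulrDr /eps -[leRHS](@divfK _ K) ?gt_eqF // ler_pM2l ?divr_gt0 //.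
  by rewrite /K addrC lerDl.
apply: (le_lt_trans (ler_rnormD _ _)).
apply: (le_lt_trans (lerD (ler_rnormD _ _) (lexx _))).
lra.
Unshelve. all: by end_near.
Qed.

End Limits.

Lemma adjointable_additive (T : E -> E) : adjointable ip T -> {morph T : x y / x + y}.
Proof.
case=> T' adjT x y; apply/eqP; rewrite -subr_eq0; apply/eqP/(hm_ipdef HM).
by set d := _ - _; rewrite {1}/d ipBl ipDl !adjT ipDl subrr.
Qed.

Lemma adjointable_scalable (T : E -> E) :
  adjointable ip T -> forall (k : R[i]) x, T (k *: x) = k *: T x.
Proof.
case=> T' adjT k x; apply/eqP; rewrite -subr_eq0; apply/eqP/(hm_ipdef HM).
by set d := _ - _; rewrite {1}/d ipBl ipZl !adjT ipZl subrr.
Qed.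

End HilbertModule.

Section IdentityMinusCompact.
Variables (R : realType) (A : completeNormedModType R[i]).
Variables (mul : A -> A -> A) (star : A -> A).
Variables (E : completeNormedModType R[i]) (act : E -> A -> E) (ip : E -> E -> A).
Variable C : E -> E.
Hypotheses (CA : Cstar_algebra mul star) (HM : Hilbert_module mul star act ip).
Hypotheses (HH : property_H ip) (HC : compact_op act ip C).
Implicit Types (x y u v : E).

Definition ImC x := x - C x.

Definition kerImC := [set u | ImC u = 0].

Definition dist_ker x := inf [set rnorm (x - v) | v in kerImC].

Lemma ImC_additive : {morph ImC : x y / x + y}.
Proof.
by move=> x y; rewrite /ImC (adjointable_additive CA HM HC.1) opprD addrACA.
Qed.

Lemma ImCB : {morph ImC : x y / x - y}.
Proof. exact: addmorphB ImC_additive. Qed.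

Lemma ImCZ (k : R[i]) x : ImC (k *: x) = k *: ImC x.
Proof. by rewrite /ImC (adjointable_scalable CA HM HC.1) scalerBr. Qed.

Lemma kerImC0 : kerImC 0.
Proof. exact: addmorph0 ImC_additive. Qed.

Lemma kerImCD u v : kerImC u -> kerImC v -> kerImC (u + v).
Proof. by rewrite /kerImC /= ImC_additive => -> ->; rewrite addr0. Qed.

Lemma kerImCZ (k : R[i]) u : kerImC u -> kerImC (k *: u).
Proof. by rewrite /kerImC /= ImCZ => ->; rewrite scaler0. Qed.

Lemma dist_ker_le x v : kerImC v -> dist_ker x <= rnorm (x - v).
Proof.
move=> v_ker; apply: ge_inf; last by exists v.
by exists 0 => _ [w _ <-]; apply: rnorm_ge0.
Qed.

Lemma dist_ker_minimizer_le x u v :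
  kerImC u -> rnorm (x - u) = dist_ker x -> kerImC v ->
  rnorm (x - u) <= rnorm (x - u - v).
Proof.
move=> u_ker -> v_ker; rewrite -addrA -opprD.
exact/dist_ker_le/kerImCD.
Qed.

Lemma bounded_ImC_cvg_subseq (z : nat -> E) M y :
  (forall n, rnorm (z n) <= M) -> (fun n => ImC (z n)) @ \oo --> y ->
  exists (phi : nat -> nat) w, phi @ \oo --> \oo /\
    (fun k => z (phi k)) @ \oo --> w /\ ImC w = y.
Proof.
move=> z_le ImCz_y.
have [phi [w [/homo_ltn_cvgny phi_oo weak_zw]]] := HH (ex_intro _ M z_le).
have Cz_w : (fun k => C (z (phi k))) @ \oo --> C w.
  by apply: (compact_op_cvg CA HM HC) weak_zw => k; apply: z_le.
have z_cvg : (fun k => z (phi k)) @ \oo --> y + C w.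
  have -> : (fun k => z (phi k)) = (ImC \o z \o phi) + (C \o z \o phi).
    by apply/funext => k /=; rewrite /ImC subrK.
  exact: cvgD (cvg_comp _ _ phi_oo ImCz_y) Cz_w.
have w_eq := weak_lim_eq_lim CA HM z_cvg weak_zw.
exists phi, w; split=> //; split; first by rewrite w_eq.
by rewrite /ImC {1}w_eq addrK.
Qed.

Lemma dist_ker_attained x : exists u, kerImC u /\ rnorm (x - u) = dist_ker x.
Proof.
have has_inf_dist : has_inf [set rnorm (x - v) | v in kerImC].
  split; first by exists (rnorm (x - 0)), 0; first exact: kerImC0.
  by exists 0 => _ [v _ <-]; apply: rnorm_ge0.
have /choice [u u_min] : forall n : nat, exists u,
    kerImC u /\ rnorm (x - u) < dist_ker x + n.+1%:R^-1.
  move=> n; have n_gt0 : 0 < (n.+1%:R^-1 : R) by rewrite invr_gt0.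
  by have [_ [u u_ker <-] ?] := inf_adherent n_gt0 has_inf_dist; exists u.
have u_le n : rnorm (u n) <= rnorm x + (dist_ker x + 1).
  have -> : u n = x - (x - u n) by rewrite opprB addrC subrK.
  rewrite (le_trans (ler_rnormB _ _)) // lerD2l ltW //.
  by rewrite (lt_le_trans (u_min n).2) // lerD2l invf_le1 ?ler1n.
have ImCu : (fun n => ImC (u n)) @ \oo --> 0.
  have -> : (fun n => ImC (u n)) = fun=> 0 by apply/funext => n; apply: (u_min n).1.
  exact: cvg_cst.
have [phi [w [phi_oo [/cvg_rnormP u_w w_ker]]]] := bounded_ImC_cvg_subseq u_le ImCu.
exists w; split=> //; apply/le_anti; rewrite dist_ker_le // andbT.
apply/ler_addgt0Pr => e e_gt0; have e2_gt0 : 0 < e / 2 by rewrite divr_gt0.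
near \oo => k.
have -> : x - w = (x - u (phi k)) + (u (phi k) - w) by rewrite addrA subrK.
rewrite (le_trans (ler_rnormD _ _)) // [e]splitr addrA ltW // ltrD //.
  apply: lt_le_trans (u_min _).2 _; rewrite lerD2l ltW //; near: k.
  apply: (phi_oo [set n | n.+1%:R^-1 < e / 2]).
  exact: near_infty_natSinv_lt (PosNum e2_gt0).
by rewrite rdistC; near: k; apply: u_w.
Unshelve. all: by end_near.
Qed.

Lemma dist_ker_minimizer_bounded (x u : nat -> E) y :
  (forall n, kerImC (u n)) -> (fun n => ImC (x n)) @ \oo --> y ->
  (forall n, rnorm (x n - u n) = dist_ker (x n)) ->
  exists M, forall n, rnorm (x n - u n) <= M.
Proof.
move=> u_ker ImCx_y u_min; apply: contrapT => unbounded.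
have /choice [m m_large] : forall k : nat, exists n, k.+1%:R < rnorm (x n - u n).
  move=> k; apply: contrapT => /forallNP small; apply: unbounded.
  by exists k.+1%:R => n; rewrite leNgt; apply/negP/small.
have [B ImCx_le] := cvgn_rnorm_bounded ImCx_y.
pose t k := rnorm (x (m k) - u (m k)).
have t_gt0 k : 0 < t k := lt_trans (ltr0Sn _ _) (m_large k).
pose w k := (t k)^-1%:C%C *: (x (m k) - u (m k)).
have w_le k : rnorm (w k) <= 1.
  by rewrite rnormZ_real gtr0_norm ?invr_gt0 // mulVf ?gt_eqF.
have ImCw : (fun k => ImC (w k)) @ \oo --> 0.
  have -> : (fun k => ImC (w k)) = fun k => (t k)^-1%:C%C *: ImC (x (m k)).
    by apply/funext => k; rewrite ImCZ ImCB u_ker subr0.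
  exact: scale_inv_cvg0 (fun k => ImCx_le (m k)) m_large.
have dist_w k v : kerImC v -> 1 <= rnorm (w k - v).
  move=> v_ker.
  have -> : w k - v = (t k)^-1%:C%C *: (x (m k) - u (m k) - (t k)%:C%C *: v).
    by rewrite scalerBr scalerA -rmorphM mulVf ?gt_eqF // rmorph1 scale1r.
  rewrite rnormZ_real gtr0_norm ?invr_gt0 // -(mulVf (lt0r_neq0 (t_gt0 k))).
  rewrite ler_pM2l ?invr_gt0 //; apply: dist_ker_minimizer_le => //.
  exact: kerImCZ.
have [phi [w0 [_ [/cvg_rnormP w_w0 w0_ker]]]] := bounded_ImC_cvg_subseq w_le ImCw.
near \oo => k.
suff : rnorm (w0 - w (phi k)) < 1 by rewrite rdistC ltNge dist_w.
by near: k; apply: w_w0.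
Unshelve. all: by end_near.
Qed.

End IdentityMinusCompact.

Theorem lemma2p4 (R : realType) (A : completeNormedModType R[i])
    (mul : A -> A -> A) (star : A -> A)
    (E : completeNormedModType R[i]) (act : E -> A -> E) (ip : E -> E -> A)
    (C : E -> E) :
  Cstar_algebra mul star ->
  Hilbert_module mul star act ip ->
  property_H ip ->
  compact_op act ip C ->
  let L := fun x : E => x - C x in
  let KerL := [set u : E | L u = 0] in
  (forall y : E, closure (range L) y ->
    exists (x u : nat -> E),
      (forall n, KerL (u n)) /\
      (fun n => L (x n)) @ \oo --> y /\
      (forall n, rnorm (x n - u n) = inf [set rnorm (x n - v) | v in KerL]))
  /\
  (forall (y : E) (x u : nat -> E),
      closure (range L) y ->
      (forall n, KerL (u n)) ->
      (fun n => L (x n)) @ \oo --> y ->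
      (forall n, rnorm (x n - u n) = inf [set rnorm (x n - v) | v in KerL]) ->
      exists M : R, forall n, rnorm (x n - u n) <= M).
Proof.
move=> CA HM HH HC L KerL; split.
  move=> y /closure_range_cvg [x Lx_y].
  have /choice [u u_min] := fun n => dist_ker_attained CA HM HH HC (x n).
  by exists x, u; split=> [n|]; [exact: (u_min n).1 | split=> // n; exact: (u_min n).2].
move=> y x u _ u_ker Lx_y u_min.
exact: (dist_ker_minimizer_bounded CA HM HH HC u_ker Lx_y u_min).
Qed.
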